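(* Let $F$ be Thompson's group with the infinite presentation $\langle x_0,x_1,x_2,\ldots \mid x_i^{-1}x_nx_i=x_{n+1} \text{ for all } i<n\rangle$, and let $w\in F$. Let $\alpha$ be the unique normal form of $w$. Then $\alpha$ is a geodesic representative of $w$ with respect to the word metric on $F$ given by the infinite generating set $\{x_0,x_1,x_2,\ldots\}$; that is, no word in the letters $x_i^{\pm1}$ representing $w$ is shorter than $\alpha$.
   Context: Every element of $F$ can be written in normal form $x_{a_1}^{r_1}x_{a_2}^{r_2}\cdots x_{a_k}^{r_k}x_{b_l}^{-s_l}\cdots x_{b_2}^{-s_2}x_{b_1}^{-s_1}$ with all $r_i,s_i>0$, $0\le a_1<a_2<\cdots<a_k$ and $0\le b_1<b_2<\cdots<b_l$. This normal form is unique (the ''unique normal form'') if one additionally requires that whenever both $x_i$ and $x_i^{-1}$ occur, at least one of $x_{i+1}$ or $x_{i+1}^{-1}$ also occurs. The length of a word is the sum of the absolute values of its exponents. *)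

From mathcomp Require Import all_boot.
Set Implicit Arguments. Unset Strict Implicit. Unset Printing Implicit Defensive.

(* A letter x_i^{+1} is (i, true); a letter x_i^{-1} is (i, false). *)
Definition letter := (nat * bool)%type.
Definition word := seq letter.

Definition wlen (u : word) : nat := size u.

Inductive F_eq : word -> word -> Prop :=
| F_refl u : F_eq u u
| F_sym u v : F_eq u v -> F_eq v u
| F_trans u v w : F_eq u v -> F_eq v w -> F_eq u w
| F_ctx p q u v : F_eq u v -> F_eq (p ++ u ++ q) (p ++ v ++ q)
| F_cancel_pn n : F_eq [:: (n, true); (n, false)] [::]
| F_cancel_np n : F_eq [:: (n, false); (n, true)] [::]
| F_rel i n : i < n ->
    F_eq [:: (i, false); (n, true); (i, true)] [:: (n.+1, true)].

(* The word x_{a_1}^{r_1} ... x_{a_k}^{r_k} x_{b_l}^{-s_l} ... x_{b_1}^{-s_1}. *)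
Definition nf_word (a r b s : seq nat) : word :=
  flatten [seq nseq rk (ak, true) | '(ak, rk) <- zip a r]
  ++ flatten (rev [seq nseq sk (bk, false) | '(bk, sk) <- zip b s]).

Definition normal_form_data (a r b s : seq nat) : Prop :=
  size a = size r /\ size b = size s /\
  all (fun k => 0 < k) r /\ all (fun k => 0 < k) s /\
  sorted ltn a /\ sorted ltn b.

Definition unique_normal_form (alpha : word) : Prop :=
  exists a r b s, normal_form_data a r b s /\
    (forall i, i \in a -> i \in b -> (i.+1 \in a) || (i.+1 \in b)) /\
    alpha = nf_word a r b s.

From mathcomp Require Import all_boot zify.

Set Implicit Arguments.
Unset Strict Implicit.
Unset Printing Implicit Defensive.

(* F acts on the points (k, s) of N x {finite bit strings}: x_i fixes the
   levels below i, merges the levels i and i + 1 into level i (remembering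
   which one by prepending a bit to s) and lowers the levels above by one.
   These maps satisfy the defining relations, so words equal in F act alike.
   The relations x_i^-1 x_c = x_c x_(i+1)^-1 (c < i) and
   x_i^-1 x_c = x_(c+1) x_i^-1 (c > i) rewrite any word beta as p q^-1 with
   p, q positive and |p| + |q| <= |beta|.
   Now let P Q^-1 be the unique normal form and p q^-1 act alike; let h and m
   be their least indices. The uniqueness condition makes P Q^-1 move a point
   of level h, so m <= h. If m < h, all points of level m are fixed, which
   forces x_m to occur both in p and in q; conjugating by x_m deletes one
   letter from each of p and q and raises all indices of P and Q. If m = h,
   the points of level h show that x_h occurs on the same side of both words,
   and it cancels there. Induction on |p| + |q| gives |P| + |Q| <= |p| + |q|. *)

Implicit Types (i k m n c h s t : nat) (p q P Q l : seq nat).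

Lemma ex_min_mem l c : c \in l -> exists2 m, m \in l & all (leq m) l.
Proof.
move=> cl; have ex_l : exists n, n \in l by exists c.
by case: (ex_minnP ex_l) => m ml min_m; exists m => //; apply/allP.
Qed.

Lemma all_ltn_notin h l : all (leq h) l -> h \notin l -> all (ltn h) l.
Proof.
move=> /allP le_hl hNl; apply/allP => c cl /=.
by rewrite ltn_neqAle le_hl // andbT; apply: contraNneq hNl => ->.
Qed.

Lemma all_leq_ltn m h l : m < h -> all (leq h) l -> all (ltn m) l.
Proof. by move=> lt_mh; apply: sub_all => c /(leq_trans lt_mh). Qed.

Lemma sorted_head_min P h :
  sorted leq P -> all (leq h) P -> h \in P -> exists P1, P = h :: P1.
Proof.
case: P => // c P sP /andP[le_hc _] hcP; suff -> : h = c by exists P.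
apply/eqP; rewrite eqn_leq le_hc /=.
move: hcP; rewrite in_cons => /orP[/eqP -> // | hP].
exact: (allP (order_path_min leq_trans sP) h hP).
Qed.

(* A point (k, s) sits at level k and carries the finite bit string s, read
   in binary from the least significant bit; bcons b s prepends the bit b. *)
Definition point := (nat * nat)%type.

Implicit Types (x : point).

Definition bcons (b : bool) (s : nat) : nat := b + s.*2.

Lemma odd_bcons b s : odd (bcons b s) = b.
Proof. by rewrite /bcons oddD oddb odd_double addbF. Qed.

Definition actx (i : nat) (x : point) : point :=
  let: (k, s) := x in
  if k < i then (k, s)
  else if k == i then (i, bcons false s)
  else if k == i.+1 then (i, bcons true s)
  else (k.-1, s).

Definition actxV (i : nat) (x : point) : point :=
  let: (k, s) := x in
  if k < i then (k, s)
  else if k == i then (i + odd s, s./2)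
  else (k.+1, s).

Ltac case_levels :=
  rewrite /actx /actxV /bcons;
  repeat (match goal with |- context [if ?b then _ else _] =>
            let E := fresh in case E: b => /= end);
  try (congr pair; lia); lia.

Lemma actxK i : cancel (actx i) (actxV i).
Proof. by case=> k s; case_levels. Qed.

Lemma actxVK i : cancel (actxV i) (actx i).
Proof. by case=> k s; case_levels. Qed.

Lemma actx_rel i n x : i < n -> actx n (actx i x) = actx i (actx n.+1 x).
Proof. by case: x => k s lt_in; case_levels. Qed.

Lemma actxV_actx_lt c i x : c < i -> actxV i (actx c x) = actx c (actxV i.+1 x).
Proof. by move=> lt_ci; rewrite -{1}[x](actxVK i.+1) -actx_rel // actxK. Qed.

Lemma actxV_actx_gt i c x : i < c -> actxV i (actx c x) = actx c.+1 (actxV i x).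
Proof. by move=> lt_ic; rewrite -{1}[x](actxVK i) actx_rel // actxK. Qed.

Lemma actx_merge h k s : h <= k <= h.+1 -> exists t, actx h (k, s) = (h, t).
Proof.
case/andP; rewrite leq_eqVlt => /orP[/eqP <- _ | lt_hk le_kh1].
  by exists (bcons false s); rewrite /actx ltnn eqxx.
have -> : k = h.+1 by apply/eqP; rewrite eqn_leq le_kh1.
by exists (bcons true s); rewrite /actx ltnNge leqnSn /= gtn_eqF // eqxx.
Qed.

Definition letter_act (l : letter) : point -> point :=
  if l.2 then actx l.1 else actxV l.1.

Definition word_act (u : word) (x : point) : point := foldr letter_act x u.

Lemma word_act_cat u v x : word_act (u ++ v) x = word_act u (word_act v x).
Proof. by rewrite /word_act foldr_cat. Qed.

Lemma F_eq_word_act u v : F_eq u v -> word_act u =1 word_act v.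
Proof.
elim=> [//| u1 v1 _ eq_uv x | u1 v1 w1 _ eq_uv _ eq_vw x | p q u1 v1 _ eq_uv x
       | n x | n x | i n lt_in x] /=.
- by rewrite eq_uv.
- by rewrite eq_uv eq_vw.
- by rewrite !word_act_cat eq_uv.
- exact: actxVK.
- exact: actxK.
- by rewrite /letter_act /= actx_rel // actxK.
Qed.

Definition pos_act (p : seq nat) (x : point) : point := foldr actx x p.

Definition neg_act (q : seq nat) (x : point) : point :=
  foldl (fun y c => actxV c y) x q.

Definition pn_act (p q : seq nat) (x : point) : point := pos_act p (neg_act q x).

Lemma pn_act_cons c p q x : pn_act (c :: p) q x = actx c (pn_act p q x).
Proof. by []. Qed.

Lemma pn_act_consV c p q x : pn_act p (c :: q) x = pn_act p q (actxV c x).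
Proof. by []. Qed.

Definition pn_word (p q : seq nat) : word :=
  [seq (i, true) | i <- p] ++ rev [seq (i, false) | i <- q].

Lemma size_pn_word p q : size (pn_word p q) = size p + size q.
Proof. by rewrite size_cat size_rev !size_map. Qed.

Lemma neg_act_rcons q c x : neg_act (rcons q c) x = actxV c (neg_act q x).
Proof. by rewrite /neg_act -cats1 foldl_cat. Qed.

Lemma word_act_pos p : word_act [seq (i, true) | i <- p] =1 pos_act p.
Proof. by elim: p => //= c p IH x; rewrite /word_act /= -/(word_act _ _) IH. Qed.

Lemma word_act_neg q : word_act (rev [seq (i, false) | i <- q]) =1 neg_act q.
Proof.
elim/last_ind: q => //= q c IH x.
by rewrite map_rcons rev_rcons neg_act_rcons -IH.
Qed.

Lemma word_act_pn_word p q : word_act (pn_word p q) =1 pn_act p q.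
Proof. by move=> x; rewrite word_act_cat word_act_pos word_act_neg. Qed.

Lemma pos_actK p : cancel (pos_act p) (neg_act p).
Proof. by elim: p => //= c p IH x; rewrite /neg_act /= actxK -/(neg_act _ _) IH. Qed.

Lemma neg_actK p : cancel (neg_act p) (pos_act p).
Proof.
elim/last_ind: p => //= p c IH x.
by rewrite neg_act_rcons /pos_act foldr_rcons /= actxVK -/(pos_act _ _) IH.
Qed.

Lemma actxV_pn_act i p q : exists p' q',
  size p' + size q' <= (size p + size q).+1 /\ actxV i \o pn_act p q =1 pn_act p' q'.
Proof.
elim: p i => [|c p IH] i.
  by exists [::], (rcons q i); split => [|x]; rewrite ?size_rcons //= neg_act_rcons.
case: (ltngtP c i) => [lt_ci | lt_ic | <-].
- have [p' [q' [size_pq' act_pq']]] := IH i.+1.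
  exists (c :: p'), q'; split => [/=|x /=]; first lia.
  by rewrite actxV_actx_lt // -act_pq'.
- have [p' [q' [size_pq' act_pq']]] := IH i.
  exists (c.+1 :: p'), q'; split => [/=|x /=]; first lia.
  by rewrite actxV_actx_gt // -act_pq'.
- by exists p, q; split => [/=|x /=]; [lia | rewrite actxK].
Qed.

Lemma word_act_pn_form u : exists p q,
  size p + size q <= size u /\ word_act u =1 pn_act p q.
Proof.
elim: u => [|[i []] u [p [q [size_pq act_pq]]]]; first by exists [::], [::].
  by exists (i :: p), q; split => [/=|x /=]; [lia | rewrite -act_pq].
have [p' [q' [size_pq' act_pq']]] := actxV_pn_act i p q.
exists p', q'; split => [/=|x /=]; first lia.
by rewrite -act_pq' /= -act_pq.
Qed.

Lemma pos_act_fix p k s : all (ltn k) p -> pos_act p (k, s) = (k, s).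
Proof. by elim: p => //= c p IH /andP[lt_kc /IH ->]; rewrite /actx lt_kc. Qed.

Lemma neg_act_fix q k s : all (ltn k) q -> neg_act q (k, s) = (k, s).
Proof. by elim: q => //= c q IH /andP[lt_kc /IH]; rewrite /neg_act /= /actxV lt_kc. Qed.

Lemma pn_act_fix p q k s : all (ltn k) p -> all (ltn k) q -> pn_act p q (k, s) = (k, s).
Proof. by move=> kp kq; rewrite /pn_act neg_act_fix ?pos_act_fix. Qed.

Lemma pos_act_level p m s : all (leq m) p -> (pos_act p (m, s)).1 = m.
Proof.
elim: p => //= c p IH /andP[le_mc /IH]; case: (pos_act p (m, s)) => k t /= ->.
by rewrite /actx; case_levels.
Qed.

Lemma pos_act_gt p m x : all (ltn m) p -> m < x.1 -> m < (pos_act p x).1.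
Proof.
elim: p => //= c p IH /andP[lt_mc /IH{}IH] /IH; case: (pos_act p x) => k t /=.
by rewrite /actx; case_levels.
Qed.

Lemma neg_act_gt q m x : all (leq m) q -> m < x.1 -> m < (neg_act q x).1.
Proof.
elim: q x => //= c q IH [k t] /andP[le_mc mq] /= lt_mk; apply: IH => //=.
by rewrite /actxV; case_levels.
Qed.

Lemma pn_act_min_pos p q m s : m \in p -> all (leq m) p -> all (ltn m) q ->
  exists t, pn_act p q (m, s) = (m, bcons false t).
Proof.
move=> mp le_mp lt_mq; rewrite /pn_act neg_act_fix //.
elim: p mp le_mp => //= c p IH mcp /andP[le_mc le_mp].
case: (eqVneq c m) mcp => [-> _ | neq_cm].
  have := pos_act_level s le_mp; case: (pos_act p (m, s)) => k t /= ->.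
  by exists t; rewrite /actx ltnn eqxx.
rewrite in_cons eq_sym (negbTE neq_cm) => /IH/(_ le_mp)[t ->].
by exists t; rewrite /actx; case_levels.
Qed.

Lemma neg_act_min q m t : all (leq m) q -> m \in q -> m < (neg_act q (m, bcons true t)).1.
Proof.
elim: q => //= c q IH /andP[le_mc le_mq]; rewrite /neg_act /= -/(neg_act _ _).
case: (eqVneq c m) => [-> _ | neq_cm].
  by apply: neg_act_gt => //; rewrite /actxV; case_levels.
have lt_mc : m < c by rewrite ltn_neqAle eq_sym neq_cm.
by rewrite in_cons eq_sym (negbTE neq_cm) lt_mc => /(IH le_mq).
Qed.

Lemma pn_act_min_neg p q m t : m \in q -> all (ltn m) p -> all (leq m) q ->
  m < (pn_act p q (m, bcons true t)).1.
Proof. by move=> mq lt_mp le_mq; apply: pos_act_gt => //; apply: neg_act_min. Qed.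

Lemma pos_act_peel p m : m \in p -> all (leq m) p ->
  exists p', size p = (size p').+1 /\ pos_act p =1 actx m \o pos_act p'.
Proof.
elim: p => //= c p IH mcp /andP[le_mc le_mp].
case: (eqVneq c m) mcp => [-> _ | neq_cm]; first by exists p.
rewrite in_cons eq_sym (negbTE neq_cm) /= => mp.
have [p' [size_p' act_p']] := IH mp le_mp.
exists (c.+1 :: p'); split => [|x /=]; first by rewrite /= size_p'.
by rewrite act_p' /= actx_rel //; lia.
Qed.

Lemma neg_act_peel q m : m \in q -> all (leq m) q ->
  exists q', size q = (size q').+1 /\ neg_act q =1 neg_act q' \o actxV m.
Proof.
move=> mq le_mq; have [q' [size_q' act_q']] := pos_act_peel mq le_mq.
exists q'; split => // x /=; apply: (can_inj (pos_actK q)).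
by rewrite neg_actK act_q' /= neg_actK actxVK.
Qed.

Lemma pos_act_shift p m x :
  all (ltn m) p -> pos_act p (actx m x) = actx m (pos_act (map S p) x).
Proof. by elim: p => //= c p IH /andP[lt_mc /IH ->]; rewrite actx_rel. Qed.

Lemma neg_act_shift q m x :
  all (ltn m) q -> neg_act q (actx m x) = actx m (neg_act (map S q) x).
Proof.
elim: q x => //= c q IH x /andP[lt_mc lt_mq].
by rewrite /neg_act /= actxV_actx_lt // -!/(neg_act _ _) IH.
Qed.

Lemma pn_act_shift P Q m x : all (ltn m) P -> all (ltn m) Q ->
  actxV m (pn_act P Q (actx m x)) = pn_act (map S P) (map S Q) x.
Proof. by move=> lt_mP lt_mQ; rewrite /pn_act neg_act_shift // pos_act_shift // actxK. Qed.

(* P and Q list, with multiplicity and in increasing order, the indices of the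
   positive and of the negative letters of a normal form (see nf_wordE). *)
Definition unique_nf (P Q : seq nat) : Prop :=
  [/\ sorted leq P, sorted leq Q &
      forall i, i \in P -> i \in Q -> (i.+1 \in P) || (i.+1 \in Q)].

Lemma unique_nf_shift P Q : unique_nf P Q -> unique_nf (map S P) (map S Q).
Proof.
case=> sP sQ nfPQ; split; rewrite ?sorted_map //.
by move=> _ /mapP[i iP ->]; rewrite !(mem_map succn_inj); apply: nfPQ.
Qed.

Lemma unique_nf_behead_pos h P Q : unique_nf (h :: P) Q -> all (leq h) Q -> unique_nf P Q.
Proof.
case=> sP sQ nfPQ le_hQ; split => //; first exact: path_sorted sP.
move=> i iP iQ; have := nfPQ i; rewrite in_cons iP orbT => /(_ isT iQ).
rewrite in_cons; case: (eqVneq i.+1 h) => [Ei | //]; have := allP le_hQ i iQ; lia.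
Qed.

Lemma unique_nf_behead_neg h P Q : unique_nf P (h :: Q) -> all (leq h) P -> unique_nf P Q.
Proof.
case=> sP sQ nfPQ le_hP; split => //; first exact: path_sorted sQ.
move=> i iP iQ; have := nfPQ i; rewrite in_cons iQ orbT => /(_ iP isT).
rewrite in_cons; case: (eqVneq i.+1 h) => [Ei | //]; have := allP le_hP i iP; lia.
Qed.

Lemma pn_act_fix_min p q m : m \in p ++ q -> all (leq m) (p ++ q) ->
  (forall s, pn_act p q (m, s) = (m, s)) -> m \in p /\ m \in q.
Proof.
rewrite mem_cat all_cat => mpq /andP[le_mp le_mq] fix_m.
have mp : m \in p.
  apply: contraT => mNp; rewrite (negbTE mNp) /= in mpq.
  have := pn_act_min_neg 0 mpq (all_ltn_notin le_mp mNp) le_mq.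
  by rewrite fix_m ltnn.
split => //; apply: contraT => mNq.
have [t] := pn_act_min_pos (bcons true 0) mp le_mp (all_ltn_notin le_mq mNq).
by rewrite fix_m => -[] /(congr1 odd); rewrite !odd_bcons.
Qed.

Lemma pn_act_min_pos_neg P Q p q h : h \in P -> all (leq h) P -> all (ltn h) Q ->
  h \in q -> all (ltn h) p -> all (leq h) q ->
  pn_act P Q (h, bcons true 0) <> pn_act p q (h, bcons true 0).
Proof.
move=> hP le_hP lt_hQ hq lt_hp le_hq.
have [t ->] := pn_act_min_pos (bcons true 0) hP le_hP lt_hQ.
by move: (pn_act_min_neg 0 hq lt_hp le_hq) => /[swap] <- /=; rewrite ltnn.
Qed.

Lemma pn_act_min_agree P Q p q h : pn_act P Q =1 pn_act p q ->
  h \in P ++ Q -> h \in p ++ q -> all (leq h) (P ++ Q) -> all (leq h) (p ++ q) ->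
  (h \in P) && (h \in p) || (h \in Q) && (h \in q).
Proof.
move=> eq_act hPQ hpq; rewrite !all_cat => /andP[le_hP le_hQ] /andP[le_hp le_hq].
move: hPQ hpq; rewrite !mem_cat.
case hP: (h \in P); case hQ: (h \in Q); case hp: (h \in p); case hq: (h \in q) => //= _ _.
- exfalso; apply: (pn_act_min_pos_neg hP le_hP _ hq _ le_hq (eq_act _)).
    exact: all_ltn_notin le_hQ (negbT hQ).
  exact: all_ltn_notin le_hp (negbT hp).
- exfalso; apply: (pn_act_min_pos_neg hp le_hp _ hQ _ le_hQ (esym (eq_act _))).
    exact: all_ltn_notin le_hq (negbT hq).
  exact: all_ltn_notin le_hP (negbT hP).
Qed.

Lemma pn_act_eq_shift P Q p q m : m \in p -> m \in q -> all (leq m) p -> all (leq m) q ->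
  all (ltn m) P -> all (ltn m) Q -> pn_act P Q =1 pn_act p q ->
  exists p' q', [/\ size p = (size p').+1, size q = (size q').+1
                  & pn_act (map S P) (map S Q) =1 pn_act p' q'].
Proof.
move=> mp mq le_mp le_mq lt_mP lt_mQ eq_act.
have [p' [size_p' act_p']] := pos_act_peel mp le_mp.
have [q' [size_q' act_q']] := neg_act_peel mq le_mq.
exists p', q'; split => // x.
by rewrite -(pn_act_shift _ lt_mP lt_mQ) eq_act /pn_act act_p' act_q' /= !actxK.
Qed.

Lemma pn_act_eq_behead h P Q p q : h \in p -> all (leq h) p ->
  pn_act (h :: P) Q =1 pn_act p q ->
  exists p', size p = (size p').+1 /\ pn_act P Q =1 pn_act p' q.
Proof.
move=> hp le_hp eq_act; have [p' [size_p' act_p']] := pos_act_peel hp le_hp.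
exists p'; split => // x; apply: (can_inj (actxK h)).
by rewrite -pn_act_cons eq_act /pn_act act_p'.
Qed.

Lemma pn_act_eq_beheadV h P Q p q : h \in q -> all (leq h) q ->
  pn_act P (h :: Q) =1 pn_act p q ->
  exists q', size q = (size q').+1 /\ pn_act P Q =1 pn_act p q'.
Proof.
move=> hq le_hq eq_act; have [q' [size_q' act_q']] := neg_act_peel hq le_hq.
exists q'; split => // x.
by rewrite -(actxK h x) -pn_act_consV eq_act /pn_act act_q' /= actxK.
Qed.

Lemma unique_nf_moves P Q h : unique_nf P Q -> h \in P ++ Q -> all (leq h) (P ++ Q) ->
  exists s, pn_act P Q (h, s) <> (h, s).
Proof.
have [n] := ubnP (size P + size Q); elim: n P Q h => // n IH P Q h /ltnSE-size_PQ nfPQ.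
rewrite mem_cat all_cat => hPQ /andP[le_hP le_hQ].
have [sP sQ nf_step] := nfPQ.
case hP: (h \in P); case hQ: (h \in Q); rewrite ?hP ?hQ //= in hPQ.
- have [P1 EP] := sorted_head_min sP le_hP hP; have [Q1 EQ] := sorted_head_min sQ le_hQ hQ.
  subst P Q; move: le_hP le_hQ => /andP[_ le_hP1] /andP[_ le_hQ1].
  have nfPQ1 : unique_nf P1 Q1.
    apply: unique_nf_behead_neg (unique_nf_behead_pos nfPQ _) le_hP1.
    by rewrite /= leqnn.
  (* The uniqueness condition at h puts h + 1 in P1 ++ Q1, so the least index h'
     of P1 Q1^-1 is h or h + 1: a level that x_h maps onto level h. *)
  have h1PQ1 : h.+1 \in P1 ++ Q1.
    move: (nf_step h (mem_head _ _) (mem_head _ _)).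
    by rewrite !in_cons (gtn_eqF (ltnSn h)) mem_cat.
  have [h' h'PQ1 le_h'PQ1] := ex_min_mem h1PQ1.
  have le_hh' : h <= h'.
    by move: h'PQ1; rewrite mem_cat => /orP[/(allP le_hP1) | /(allP le_hQ1)].
  have le_h'h1 : h' <= h.+1 := allP le_h'PQ1 _ h1PQ1.
  rewrite /= addSn addnS in size_PQ.
  have [s moves] := IH P1 Q1 h' (ltnW size_PQ) nfPQ1 h'PQ1 le_h'PQ1.
  have [t Ez] := actx_merge s (introT andP (conj le_hh' le_h'h1)).
  exists t; rewrite pn_act_cons pn_act_consV -Ez actxK.
  by move/(can_inj (actxK h)).
- exists (bcons true 0).
  have [t ->] := pn_act_min_pos (bcons true 0) hP le_hP (all_ltn_notin le_hQ (negbT hQ)).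
  by move=> -[] /(congr1 odd); rewrite !odd_bcons.
- exists (bcons true 0) => fix_h.
  have := pn_act_min_neg 0 hQ (all_ltn_notin le_hP (negbT hP)) le_hQ.
  by rewrite fix_h ltnn.
Qed.

Lemma unique_nf_shortest P Q p q : unique_nf P Q -> pn_act P Q =1 pn_act p q ->
  size P + size Q <= size p + size q.
Proof.
have [n] := ubnP (size p + size q); elim: n P Q p q => // n IH P Q p q /ltnSE-size_pq.
move=> nfPQ eq_act; case E: (P ++ Q) => [|c PQ].
  by move/(congr1 size): E; rewrite size_cat => ->.
have [h hPQ le_hPQ] := ex_min_mem (mem_head c PQ); rewrite -E in hPQ le_hPQ.
have [s moves] := unique_nf_moves nfPQ hPQ le_hPQ.
have [m mpq le_mpq] : exists2 m, m \in p ++ q & all (leq m) (p ++ q).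
  case E': (p ++ q) => [|d pq]; last exact: ex_min_mem (mem_head d pq).
  move/nilP: E'; rewrite cat_nilp => /andP[/nilP p0 /nilP q0].
  by case: moves; rewrite eq_act p0 q0.
move: (le_hPQ) (le_mpq); rewrite !all_cat => /andP[le_hP le_hQ] /andP[le_mp le_mq].
case: (ltngtP m h) => [lt_mh | lt_hm | eq_mh].
- have [lt_mP lt_mQ] := (all_leq_ltn lt_mh le_hP, all_leq_ltn lt_mh le_hQ).
  have fix_m s' : pn_act p q (m, s') = (m, s') by rewrite -eq_act pn_act_fix.
  have [mp mq] := pn_act_fix_min mpq le_mpq fix_m.
  have [p' [q' [size_p' size_q' eq_act']]] :=
    pn_act_eq_shift mp mq le_mp le_mq lt_mP lt_mQ eq_act.
  rewrite size_p' size_q' addSn addnS in size_pq *.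
  have := IH _ _ p' q' (ltnW size_pq) (unique_nf_shift nfPQ) eq_act'.
  by rewrite !size_map => /leqW/leqW.
- by case: moves; rewrite eq_act pn_act_fix // (all_leq_ltn lt_hm).
- subst m; have [sP sQ _] := nfPQ.
  case/orP: (pn_act_min_agree eq_act hPQ mpq le_hPQ le_mpq) => /andP[hP hp].
  + have [P1 EP] := sorted_head_min sP le_hP hP; subst P.
    have [p' [size_p' eq_act']] := pn_act_eq_behead hp le_mp eq_act.
    rewrite size_p' addSn in size_pq *; rewrite /= addSn ltnS.
    exact: IH P1 Q p' q size_pq (unique_nf_behead_pos nfPQ le_hQ) eq_act'.
  + have [Q1 EQ] := sorted_head_min sQ le_hQ hP; subst Q.
    have [q' [size_q' eq_act']] := pn_act_eq_beheadV hp le_mq eq_act.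
    rewrite size_q' addnS in size_pq *; rewrite /= addnS ltnS.
    exact: IH P Q1 p q' size_pq (unique_nf_behead_neg nfPQ le_hP) eq_act'.
Qed.

Definition expand (a r : seq nat) : seq nat :=
  flatten [seq nseq k i | '(i, k) <- zip a r].

Lemma expand_cons i k a r : expand (i :: a) (k :: r) = nseq k i ++ expand a r.
Proof. by []. Qed.

Lemma nf_wordE (a r b s : seq nat) : nf_word a r b s = pn_word (expand a r) (expand b s).
Proof.
rewrite /nf_word /pn_word /expand !map_flatten rev_flatten -!map_comp.
congr (flatten _ ++ flatten _).
  by apply: eq_map => -[i k] /=; rewrite map_nseq.
by congr rev; apply: eq_map => -[i k] /=; rewrite map_nseq rev_nseq.
Qed.

Lemma mem_expand_sub a r i : i \in expand a r -> i \in a.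
Proof.
elim: a r => [|y a IH] [|k r] //; rewrite expand_cons mem_cat in_cons.
by case/orP => [/nseqP[-> _] | /IH ->]; rewrite ?eqxx ?orbT.
Qed.

Lemma mem_expand a r i : all (fun k => 0 < k) r -> size a = size r ->
  (i \in expand a r) = (i \in a).
Proof.
elim: a r => [|y a IH] [|k r] //= /andP[k_gt0 r_gt0] [size_ar].
by rewrite expand_cons mem_cat mem_nseq k_gt0 IH // in_cons.
Qed.

Lemma sorted_expand a r : sorted leq a -> sorted leq (expand a r).
Proof.
rewrite !(sorted_pairwise leq_trans).
elim: a r => [|y a IH] [|k r] //=; rewrite expand_cons pairwise_cat.
move=> /andP[le_ya /IH ->]; rewrite andbT; apply/andP; split.
  by apply/allrelP => _ v /nseqP[-> _] /mem_expand_sub; apply: (allP le_ya).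
by elim: k => //= k ->; rewrite andbT; apply/allP => _ /nseqP[-> _].
Qed.

Theorem lemma2p1 (w alpha : word) :
  unique_normal_form alpha -> F_eq alpha w ->
  forall beta : word, F_eq beta w -> wlen alpha <= wlen beta.
Proof.
move=> [a [r [b [s [[size_ar [size_bs [r_gt0 [s_gt0 [sorted_a sorted_b]]]]] [nf_ab ->]]]]]].
move=> alpha_w beta beta_w.
have nfPQ : unique_nf (expand a r) (expand b s).
  split; [exact/sorted_expand/(sub_sorted ltnW) | exact/sorted_expand/(sub_sorted ltnW) |].
  by move=> i; rewrite !mem_expand //; apply: nf_ab.
have [p [q [size_pq beta_pq]]] := word_act_pn_form beta.
rewrite /wlen nf_wordE size_pn_word (leq_trans _ size_pq) //.
apply: unique_nf_shortest nfPQ _ => x.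
rewrite -word_act_pn_word -nf_wordE -beta_pq.
exact: F_eq_word_act (F_trans alpha_w (F_sym beta_w)) x.
Qed.
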